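(* Let $p>0$, $M$ a positive integer and $Y\in\Upsilon^m_p\cap(\mathbb{C}^{M\times M})^m$. Then: (i) The map $X\mapsto K_p(X,Y)$, defined on $\Upsilon^m_p$ with values in $\coprod_N\mathbb{C}^{N\times N}\otimes\mathbb{C}^{M\times M}$, is a noncommutative function that belongs to $\overline{H^2_{m,p}}\otimes\mathbb{C}^{M\times M}$; that is, for all $e_1,e_2\in\mathbb{C}^M$ the function $e_1^\ast K_p(\cdot,Y)e_2: X\mapsto\sum_{w\in\mathcal{F}_m}p^{|w|}\,(e_1^\ast(Y^w)^\ast e_2)\,X^w$ belongs to $\overline{H^2_{m,p}}$. (ii) For all $e_1,e_2\in\mathbb{C}^M$ and all $f\in\overline{H^2_{m,p}}$, \[ \langle f,\,e_1^\ast K_p(\cdot,Y)e_2\rangle_{\ell^2_p(\mathcal{F}_m)}=e_2^\ast f(Y)e_1. \]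
   Context: $\mathcal{F}_m$ is the free monoid on $\{1,\dots,m\}$, $\mathcal{F}_m^{[l]}$ the words of length $l$; for $X\in(\mathbb{C}^{N\times N})^m$, $X^w=X_{w_1}\cdots X_{w_t}$, $X^\emptyset=I_N$. For $p>0$, $\ell^2_p(\mathcal{F}_m)$ is the Hilbert space of complex sequences $\{f_w\}$ with $\sum_wp^{-|w|}|f_w|^2<\infty$, with inner product $\langle\{f_w\},\{g_w\}\rangle=\sum_wp^{-|w|}f_w\overline{g_w}$. $\Upsilon^m_p$ is the set of $X\in\coprod_N(\mathbb{C}^{N\times N})^m$ such that $\sum_{w\in\mathcal{F}_m}p^{|w|}(X^w)^\ast X^w$ converges. For $X,Y\in\Upsilon^m_p$ (with $X$ of size $N$, $Y$ of size $M$), $K_p(X,Y)=\sum_{l=0}^\infty\sum_{w\in\mathcal{F}_m^{[l]}}p^l\,X^w\otimes(Y^w)^\ast\in\mathbb{C}^{N\times N}\otimes\mathbb{C}^{M\times M}$ (the series converges). $\overline{H^2_{m,p}}$ is the space of noncommutative functions $f:\Upsilon^m_p\to\coprod_N\mathbb{C}^{N\times N}$ (mapping level $N$ to $\mathbb{C}^{N\times N}$, respecting direct sums and similarities) for which there is $\{f_w\}\in\ell^2_p(\mathcal{F}_m)$ with $f(X)=\sum_{l=0}^\infty\sum_{w\in\mathcal{F}_m^{[l]}}f_wX^w$ for all $X\in\Upsilon^m_p$; it is a Hilbert space with the inner product of $\ell^2_p(\mathcal{F}_m)$ applied to the coefficient sequences. For $e_1,e_2\in\mathbb{C}^M$ and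 a function $F$ with values in $\mathbb{C}^{N\times N}\otimes\mathbb{C}^{M\times M}$, $e_1^\ast Fe_2$ denotes $(I_N\otimes e_1^\ast)F(I_N\otimes e_2)$. *)

From HB Require Import structures.
From mathcomp Require Import all_boot all_order all_algebra.
From mathcomp Require Import all_classical all_reals all_analysis.
From mathcomp Require Export complex mxtens.
Import Order.TTheory GRing.Theory Num.Theory.
Import numFieldNormedType.Exports.

Set Implicit Arguments.
Unset Strict Implicit.
Unset Printing Implicit Defensive.

Local Open Scope ring_scope.
Local Open Scope classical_set_scope.

(* The complex numbers R[i] (R : realType) get their canonical normed
   (hence topological) structure as a numClosedFieldType, exactly as
   MathComp-Analysis does for an abstract numClosedFieldType. *)
HB.instance Definition _ (R : rcfType) := GRing.ComAlgebra.copy R[i] (R[i])^o.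
HB.instance Definition _ (R : rcfType) := Vector.copy R[i] (R[i])^o.
HB.instance Definition _ (R : rcfType) := NormedModule.copy R[i] (R[i])^o.

Section Defs.
Variables (R : realType) (m : nat).
Local Notation C := R[i].
(* words of the free monoid F_m on {0,..,m-1} are  seq 'I_m ; |w| = size w *)

Definition rC (x : R) : C := Complex x 0.

Definition mxadj (a b : nat) (A : 'M[C]_(a, b)) : 'M[C]_(b, a) :=
  (map_mx Num.conj A)^T.

Definition wpow (N : nat) (X : 'I_m -> 'M[C]_N) (w : seq 'I_m) : 'M[C]_N :=
  foldr (fun i A => X i *m A) 1%:M w.

Definition lsum (V : zmodType) (l : nat) (F : seq 'I_m -> V) : V :=
  \sum_(w : l.-tuple 'I_m) F (tval w).

Definition psum (V : zmodType) (F : seq 'I_m -> V) (L : nat) : V :=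
  \sum_(l < L) lsum l F.

Definition Upsilon (p : R) (N : nat) (X : 'I_m -> 'M[C]_N) : Prop :=
  exists S : 'M[C]_N,
    psum (fun w => rC (p ^+ size w) *: (mxadj (wpow X w) *m wpow X w)) @ \oo --> S.

Definition ell2 (p : R) (f : seq 'I_m -> C) : Prop :=
  exists s : C, psum (fun w => rC (p ^- size w) * `|f w| ^+ 2) @ \oo --> s.

(* <{f_w},{g_w}>_{l^2_p} = v  (the defining series converges to v) *)
Definition ip_to (p : R) (f g : seq 'I_m -> C) (v : C) : Prop :=
  psum (fun w => rC (p ^- size w) * f w * Num.conj (g w)) @ \oo --> v.

(* functions defined on coprod_N (C^{NxN})^m with values in coprod_N C^{NxN}
   (only their values on Upsilon^m_p matter) *)
Definition ncmap := forall N : nat, ('I_m -> 'M[C]_N) -> 'M[C]_N.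

Definition dsum (N K : nat) (X : 'I_m -> 'M[C]_N) (Z : 'I_m -> 'M[C]_K)
  : 'I_m -> 'M[C]_(N + K) := fun i => block_mx (X i) 0 0 (Z i).

Definition simil (N : nat) (S : 'M[C]_N) (X : 'I_m -> 'M[C]_N) : 'I_m -> 'M[C]_N :=
  fun i => invmx S *m X i *m S.

Definition ncfun (p : R) (f : ncmap) : Prop :=
  (forall N K (X : 'I_m -> 'M[C]_N) (Z : 'I_m -> 'M[C]_K),
      Upsilon p X -> Upsilon p Z -> Upsilon p (dsum X Z) ->
      f (N + K)%N (dsum X Z) = block_mx (f N X) 0 0 (f K Z)) /\
  (forall N (X : 'I_m -> 'M[C]_N) (S : 'M[C]_N),
      S \in unitmx -> Upsilon p X -> Upsilon p (simil S X) ->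
      f N (simil S X) = invmx S *m f N X *m S).

Definition coeffs (p : R) (c : seq 'I_m -> C) (f : ncmap) : Prop :=
  ell2 p c /\
  forall N (X : 'I_m -> 'M[C]_N), Upsilon p X ->
    psum (fun w => c w *: wpow X w) @ \oo --> f N X.

Definition H2 (p : R) (f : ncmap) : Prop :=
  ncfun p f /\ exists c, coeffs p c f.

(* K_p(X,Y) = sum_l sum_{|w|=l} p^l X^w (x) (Y^w)^*  in C^{NxN} (x) C^{MxM}
   (Kronecker product, C^{NxN} (x) C^{MxM} = C^{NM x NM}) *)
Definition Kp (p : R) (N M : nat) (X : 'I_m -> 'M[C]_N) (Y : 'I_m -> 'M[C]_M)
  : 'M[C]_(N * M) :=
  lim (psum (fun w => rC (p ^+ size w) *: (tensmx (wpow X w) (mxadj (wpow Y w)))) @ \oo).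

(* slice e1 e2 F := (I_N (x) e1^H) F (I_N (x) e2), i.e. e1^H F e2 (^H = conjugate transpose) *)
Definition slice (N M : nat) (e1 e2 : 'cV[C]_M) (F : 'M[C]_(N * M)) : 'M[C]_N :=
  castmx (muln1 N, muln1 N)
    (tensmx 1%:M (mxadj e1) *m F *m tensmx 1%:M e2).

End Defs.

From HB Require Import structures.
From mathcomp Require Import all_boot all_order all_algebra.
From mathcomp Require Import all_classical all_reals all_analysis.
From mathcomp Require Import complex mxtens.
From mathcomp Require Import ring.
Import Order.TTheory GRing.Theory Num.Theory.
Import numFieldNormedType.Exports.

Set Implicit Arguments.
Unset Strict Implicit.
Unset Printing Implicit Defensive.

Local Open Scope ring_scope.
Local Open Scope classical_set_scope.

(* The series defining K_p(X, Y) converges entrywise, absolutely: each entry is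
   sum_w p^|w| X^w_ab conj(Y^w_cd), and |x y| <= |x|^2 + |y|^2 dominates it by diagonal
   entries of the positive series sum_w p^|w| (X^w)^* X^w and sum_w p^|w| (Y^w)^* Y^w,
   which converge since X, Y lie in Upsilon. Slicing yields the coefficients
   k_w = p^|w| e1^* (Y^w)^* e2 of e1^* K_p(., Y) e2, and a function given by a series on
   Upsilon is a noncommutative function. Coefficients are unique, because evaluating at
   nilpotent word matrices isolates each of them. Hence <f, e1^* K_p(., Y) e2> equals
   sum_w f_w e2^* Y^w e1 = e2^* f(Y) e1, and the case f = e1^* K_p(., Y) e2 shows that
   (k_w) lies in l^2_p. *)

Section complex_series.
Variable R : realType.
Local Notation C := R[i].

Lemma normC_real (x : R) : `|x%:C%C| = `|x|%:C%C :> C.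
Proof. by rewrite normc_def /= expr0n addr0 sqrtr_sqr. Qed.

Lemma normC_Im (z : C) : `|complex.Im z|%:C%C <= `|z|.
Proof.
have -> : complex.Im z = - complex.Re (z * 'i%C) by rewrite ReiNIm opprK.
rewrite normrN (le_trans (normc_ge_Re _)) // normrM [`|'i%C|]normc_def /=.
by rewrite expr0n expr1n add0r sqrtr1 mulr1.
Qed.

Lemma cvg_real_complex (u : nat -> R) (l : R) :
  u @ \oo --> l -> (fun n => (u n)%:C%C : C) @ \oo --> l%:C%C.
Proof.
move=> /cvgrPdist_lt ul; apply/cvgrPdist_lt => e e_gt0.
have [/eqP Ime Ree] : complex.Im e == 0 /\ 0 < complex.Re e.
  by move: e_gt0; rewrite ltcE /= => /andP[].
apply: filterS (ul _ Ree) => n; rewrite -rmorphB normC_real.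
by case: e Ime {e_gt0 Ree} => a b /= ->; rewrite ltcR.
Qed.

Lemma cvg_Complex (u v : nat -> R) (a b : R) :
  u @ \oo --> a -> v @ \oo --> b ->
  (fun n => Complex (u n) (v n)) @ \oo --> Complex a b.
Proof.
move=> ua vb; have E (x y : R) : Complex x y = x%:C%C + 'i%C * y%:C%C.
  by apply/eqP; rewrite eq_complex /= !(mul0r, mulr0, mul1r, subr0, addr0, add0r) !eqxx.
under eq_cvg do rewrite E.
by rewrite E; apply: cvgD; [|apply: cvgMr]; exact: cvg_real_complex.
Qed.

Lemma cvg_series_normC_bounded (u : nat -> C) (B : C) :
  (forall n, \sum_(k < n) `|u k| <= B) -> cvgn (fun n => \sum_(k < n) u k).
Proof.
move=> uB.
have part_cvg (f : C -> R) : (forall z, `|f z|%:C%C <= `|z|) -> cvgn (series (f \o u)).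
  move=> f_le; apply: normed_cvg; apply: nondecreasing_is_cvgn.
    by apply: nondecreasing_series => k _ _; exact: normr_ge0.
  exists (complex.Re B) => _ [n _ <-]; rewrite /normed_series_of seriesEord /=.
  have : (\sum_(k < n) `|f (u k)|)%:C%C <= B.
    by rewrite rmorph_sum; apply: le_trans (uB n); apply: ler_sum => k _; exact: f_le.
  by rewrite lecE => /andP[].
apply/cvg_ex; eexists; under eq_cvg => n.
  have -> : \sum_(k < n) u k = Complex (series (fun k => complex.Re (u k)) n)
                                        (series (fun k => complex.Im (u k)) n).
    rewrite !seriesEord /=.
    by elim/big_rec3: _ => [|k a b z _ ->] //; case: (u k).
  over.
exact: cvg_Complex (part_cvg _ (@normc_ge_Re R)) (part_cvg _ normC_Im).
Qed.

End complex_series.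

Section matrix_convergence.
Variable K : numFieldType.

Lemma cvg_mxP a b (u : nat -> 'M[K]_(a, b)) (A : 'M[K]_(a, b)) :
  u @ \oo --> A <-> forall i j, (fun n => u n i j) @ \oo --> A i j.
Proof.
split=> [uA i j | uA].
  exact: cvg_trans (cvg_app (fun M : 'M[K]_(a, b) => M i j) uA)
                   (@coord_continuous K a b i j A).
apply/cvg_mx_entourageP => E entE.
apply: filter_forall => i; apply: filter_forall => j.
move/cvg_entourageP: (uA i j) => /(_ E entE) uE.
by near=> n; apply/mem_set; near: n.
Unshelve. all: by end_near.
Qed.

Lemma cvgn_mxP a b (u : nat -> 'M[K]_(a, b)) :
  cvgn u <-> forall i j, cvgn (fun n => u n i j).
Proof.
split=> [/cvg_ex[A /cvg_mxP uA] i j | uij]; first by apply/cvg_ex; exists (A i j).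
apply/cvg_ex; exists (\matrix_(i, j) lim ((fun n => u n i j) @ \oo)).
by apply/cvg_mxP => i j; rewrite mxE; exact: uij.
Qed.

Lemma cvg_sum (I : finType) (f : I -> nat -> K) (l : I -> K) :
  (forall i, f i @ \oo --> l i) -> (fun n => \sum_i f i n) @ \oo --> \sum_i l i.
Proof. by move=> fl; apply: cvg_big => //; exact: add_continuous. Qed.

Lemma cvg_mulmx2 a b c d (P : 'M[K]_(a, b)) (Q : 'M[K]_(c, d))
    (u : nat -> 'M[K]_(b, c)) (A : 'M[K]_(b, c)) :
  u @ \oo --> A -> (fun n => P *m u n *m Q) @ \oo --> P *m A *m Q.
Proof.
move=> /cvg_mxP uA; apply/cvg_mxP => i j.
have E (M : 'M[K]_(b, c)) : (P *m M *m Q) i j = \sum_l (\sum_k P i k * M k l) * Q l j.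
  by rewrite mxE; apply: eq_bigr => l _; rewrite mxE.
under eq_cvg do rewrite E.
by rewrite E; apply: cvg_sum => l; apply: cvgMl; apply: cvg_sum => k; apply: cvgMr.
Qed.

Lemma cvg_mx_unique a b (u : nat -> 'M[K]_(a, b)) (A B : 'M[K]_(a, b)) :
  u @ \oo --> A -> u @ \oo --> B -> A = B.
Proof. by move=> uA uB; apply: (cvg_unique (@norm_hausdorff _ _) uA uB). Qed.

End matrix_convergence.

Section word_sums.
Variable m : nat.
Implicit Types (V W : zmodType).

Lemma psum_morph V W (f : V -> W) (F : seq 'I_m -> V) L :
  {morph f : x y / x + y} -> f 0 = 0 -> f (psum F L) = psum (fun w => f (F w)) L.
Proof.
move=> fD f0; rewrite /psum (big_morph f fD f0); apply: eq_bigr => l _.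
by rewrite /lsum (big_morph f fD f0).
Qed.

Lemma psumD V (F G : seq 'I_m -> V) L :
  psum (fun w => F w + G w) L = psum F L + psum G L.
Proof.
rewrite /psum -big_split; apply: eq_bigr => l _.
by rewrite /lsum -big_split.
Qed.

Lemma psum_mxE (K : pzRingType) a b (F : seq 'I_m -> 'M[K]_(a, b)) L i j :
  psum F L i j = psum (fun w => F w i j) L.
Proof.
by apply: (@psum_morph _ _ (fun A : 'M[K]_(a, b) => A i j)) => [A B|]; rewrite mxE.
Qed.

Lemma psum_mulmx2 (K : pzRingType) a b c d (P : 'M[K]_(a, b)) (Q : 'M[K]_(c, d))
    (F : seq 'I_m -> 'M[K]_(b, c)) L :
  P *m psum F L *m Q = psum (fun w => P *m F w *m Q) L.
Proof.
apply: (@psum_morph _ _ (fun A => P *m A *m Q)); last by rewrite mulmx0 mul0mx.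
by move=> A B; rewrite mulmxDr mulmxDl.
Qed.

Lemma psum_ler (K : numDomainType) (F G : seq 'I_m -> K) L :
  (forall w, F w <= G w) -> psum F L <= psum G L.
Proof. by move=> FG; do 2![apply: ler_sum => ? _]. Qed.

Lemma psum_finite_support V (F : seq 'I_m -> V) K :
  (forall w, (K < size w)%N -> F w = 0) ->
  forall L, (K < L)%N -> psum F L = psum F K.+1.
Proof.
move=> F0; elim=> // L IH; rewrite ltnS leq_eqVlt => /orP[/eqP -> // | KL].
rewrite {1}/psum big_ord_recr /= -/(psum F L) IH //.
suff -> : lsum L F = 0 by rewrite addr0.
by apply: big1 => w _; apply: F0; rewrite size_tuple.
Qed.

Lemma cvg_psum_finite_support (K : numFieldType) a b
    (F : seq 'I_m -> 'M[K]_(a, b)) S :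
  (forall w, (S < size w)%N -> F w = 0) -> psum F @ \oo --> psum F S.+1.
Proof.
move=> F0; apply: cvg_near_cst; exists S.+1 => // L /= SL.
exact: psum_finite_support.
Qed.

End word_sums.

Lemma block_diag_mxE (K : pzRingType) a b (A : 'M[K]_a) (B : 'M[K]_b) :
  block_mx A 0 0 B =
  col_mx 1%:M 0 *m A *m row_mx 1%:M 0 + col_mx 0 1%:M *m B *m row_mx 0 1%:M.
Proof.
rewrite -!mulmxA !mul_mx_row !mul_col_mx !mulmx1 !mulmx0 !mul1mx !mul0mx.
by rewrite add_row_mx !add_col_mx !addr0 !add0r block_mxEh.
Qed.

Section noncommutative_series.
Variables (R : realType) (m : nat).
Local Notation C := R[i].

Lemma wpow_dsum N K (X : 'I_m -> 'M[C]_N) (Z : 'I_m -> 'M[C]_K) w :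
  wpow (dsum X Z) w = block_mx (wpow X w) 0 0 (wpow Z w).
Proof.
elim: w => [|i w IH] /=; first by rewrite scalar_mx_block.
by rewrite IH mulmx_block !mulmx0 !mul0mx !addr0 !add0r.
Qed.

Lemma wpow_simil N (S : 'M[C]_N) (X : 'I_m -> 'M[C]_N) w :
  S \in unitmx -> wpow (simil S X) w = invmx S *m wpow X w *m S.
Proof.
move=> S_unit; elim: w => [|i w IH] /=; first by rewrite mulmx1 mulVmx.
by rewrite IH -!mulmxA (mulmxA S) mulmxV // mul1mx.
Qed.

Lemma ncfun_series (p : R) (c : seq 'I_m -> C) (f : ncmap R m) :
  (forall N (X : 'I_m -> 'M[C]_N), Upsilon p X ->
     psum (fun w => c w *: wpow X w) @ \oo --> f N X) ->
  ncfun p f.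
Proof.
move=> cf; split=> [N K X Z X_ups Z_ups XZ_ups | N X S S_unit X_ups SX_ups].
  apply: cvg_mx_unique (cf _ _ XZ_ups) _.
  have -> : psum (fun w => c w *: wpow (dsum X Z) w) = fun L =>
      col_mx 1%:M 0 *m psum (fun w => c w *: wpow X w) L *m row_mx 1%:M 0 +
      col_mx 0 1%:M *m psum (fun w => c w *: wpow Z w) L *m row_mx 0 1%:M.
    apply: funext => L; rewrite !psum_mulmx2 -psumD; congr psum; apply: funext => w.
    by rewrite wpow_dsum scale_block_mx !scaler0 block_diag_mxE.
  by rewrite block_diag_mxE; apply: cvgD; apply: cvg_mulmx2; exact: cf.
apply: cvg_mx_unique (cf _ _ SX_ups) _.
have -> : psum (fun w => c w *: wpow (simil S X) w) =
    fun L => invmx S *m psum (fun w => c w *: wpow X w) L *m S.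
  apply: funext => L; rewrite psum_mulmx2; congr psum; apply: funext => w.
  by rewrite wpow_simil // scalemxAl scalemxAr.
exact: cvg_mulmx2 (cf _ _ X_ups).
Qed.

End noncommutative_series.

Section word_matrices.
Variables (R : realType) (m : nat).
Local Notation C := R[i].

(* [word_mx u] is the path 0 -> 1 -> ... -> size u with a-th edge labelled [nth _ u a]:
   [wpow (word_mx u) w] is 0 for words longer than [u] and its corner entry is
   [w == u], so evaluating a series at [word_mx u] isolates the coefficient of [u]. *)
Definition word_mx (u : seq 'I_m) (i : 'I_m) : 'M[C]_((size u).+1) :=
  \matrix_(a, b) (((b : nat) == a.+1) && (nth i u a == i))%:R.

Lemma sum_ord_eq n k : \sum_(c < n) (((c : nat) == k)%:R : C) = (k < n)%:R.
Proof.
case: (ltnP k n) => [kn | nk].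
  rewrite (bigD1 (Ordinal kn)) //= eqxx big1 ?addr0 // => c /eqP ck.
  by case: eqP => // ck'; case: ck; apply: val_inj.
by rewrite big1 // => c _; case: eqP => // ck; move: (ltn_ord c); rewrite ck ltnNge nk.
Qed.

Lemma wpow_word_mx u w (a b : 'I_((size u).+1)) :
  wpow (word_mx u) w a b =
  (((b : nat) == (a + size w)%N) && (take (size w) (drop a u) == w))%:R.
Proof.
elim: w a b => [|i w IH] a b.
  by rewrite /= mxE addn0 take0 eqxx andbT eq_sym.
rewrite /= mxE.
pose P := [&& nth i u a == i, (b : nat) == (a.+1 + size w)%N
            & take (size w) (drop a.+1 u) == w].
transitivity (\sum_(c < (size u).+1) ((((c : nat) == a.+1)%:R : C) * P%:R)).
  apply: eq_bigr => c _; rewrite !mxE IH.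
  case: eqP => [->|_]; last by rewrite !mul0r.
  by rewrite /P mul1r -natrM mulnb; case: (nth i u a == i).
rewrite -mulr_suml sum_ord_eq -natrM mulnb /P.
case: (ltnP a (size u)) => au /=.
  by rewrite (drop_nth i au) /= eqseq_cons addnS addSn ltnS au andTb andbCA.
rewrite addnS -addSn.
have -> : ((b : nat) == (a.+1 + size w)%N) = false.
  apply/negbTE; rewrite neq_ltn (leq_trans (ltn_ord b)) //.
  by rewrite addSn ltnS (leq_trans au) ?leq_addr.
by rewrite !(andbF, andFb).
Qed.

Lemma wpow_word_mx_long u w : (size u < size w)%N -> wpow (word_mx u) w = 0.
Proof.
move=> uw; apply/matrixP => a b; rewrite wpow_word_mx mxE (_ : _ == _ = false) //.
by apply/negbTE; rewrite neq_ltn (leq_trans (ltn_ord b)) // (leq_trans uw) ?leq_addl.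
Qed.

Lemma wpow_word_mx_corner u w : wpow (word_mx u) w ord0 ord_max = (w == u)%:R.
Proof.
rewrite wpow_word_mx /= add0n drop0.
have [->|/eqP uw] := eqVneq (size w) (size u); first by rewrite take_size eq_sym.
by have [wu|//] := eqVneq w u; rewrite wu in uw.
Qed.

Lemma Upsilon_word_mx (p : R) u : Upsilon p (word_mx u).
Proof.
eexists; apply: (cvg_psum_finite_support (S := size u)) => w uw.
by rewrite wpow_word_mx_long // mulmx0 scaler0.
Qed.

Lemma psum_word_mx_corner (c : seq 'I_m -> C) u :
  psum (fun w => c w *: wpow (word_mx u) w) (size u).+1 ord0 ord_max = c u.
Proof.
have corner w : (c w *: wpow (word_mx u) w) ord0 ord_max = c w * (w == u)%:R.
  by rewrite mxE wpow_word_mx_corner.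
rewrite psum_mxE /psum big_ord_recr /= big1 => [|l _]; last first.
  apply: big1 => t _; rewrite corner; case: eqP => [tu|]; last by rewrite mulr0.
  by move: (ltn_ord l); rewrite -[X in (X < _)%N](size_tuple t) tu ltnn.
rewrite add0r /lsum (bigD1 (in_tuple u)) //= corner eqxx mulr1 big1 ?addr0 // => t tu.
rewrite corner; case: eqP => [tu'|]; last by rewrite mulr0.
by case/eqP: tu; apply: val_inj.
Qed.

Lemma coeffs_unique (p : R) (c d : seq 'I_m -> C) (f : ncmap R m) :
  coeffs p c f -> coeffs p d f -> c = d.
Proof.
move=> [_ cf] [_ df]; apply: funext => u.
have series_at (e : seq 'I_m -> C) :
    psum (fun w => e w *: wpow (word_mx u) w) @ \oo -->
    psum (fun w => e w *: wpow (word_mx u) w) (size u).+1.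
  by apply: cvg_psum_finite_support => w uw; rewrite wpow_word_mx_long // scaler0.
rewrite -(psum_word_mx_corner c u) -(psum_word_mx_corner d u).
by rewrite -(cvg_mx_unique (cf _ _ (Upsilon_word_mx p u)) (series_at c))
  -(cvg_mx_unique (df _ _ (Upsilon_word_mx p u)) (series_at d)).
Qed.

End word_matrices.

Section adjoint.
Variable R : realType.
Local Notation C := R[i].

Lemma mxadjE a b (A : 'M[C]_(a, b)) i j : mxadj A i j = (A j i)^*.
Proof. by rewrite !mxE. Qed.

Lemma mxadjM a b c (A : 'M[C]_(a, b)) (B : 'M[C]_(b, c)) :
  mxadj (A *m B) = mxadj B *m mxadj A.
Proof. by rewrite /mxadj map_mxM trmx_mul. Qed.

Lemma mxadjK a b (A : 'M[C]_(a, b)) : mxadj (mxadj A) = A.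
Proof. by apply/matrixP => i j; rewrite !mxE conjCK. Qed.

End adjoint.

Section slices.
Variables (R : realType) (N M : nat) (e1 e2 : 'cV[R[i]]_M).
Local Notation C := R[i].

Lemma sliceD (F G : 'M[C]_(N * M)) :
  slice e1 e2 (F + G) = slice e1 e2 F + slice e1 e2 G.
Proof. by apply/matrixP => i j; rewrite /slice mulmxDr mulmxDl !(castmxE, mxE). Qed.

Lemma sliceZ (k : C) (F : 'M[C]_(N * M)) : slice e1 e2 (k *: F) = k *: slice e1 e2 F.
Proof. by apply/matrixP => i j; rewrite /slice -scalemxAr -scalemxAl !(castmxE, mxE). Qed.

Lemma slice_psum m (F : seq 'I_m -> 'M[C]_(N * M)) L :
  slice e1 e2 (psum F L) = psum (fun w => slice e1 e2 (F w)) L.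
Proof.
apply: (@psum_morph _ _ _ (slice e1 e2)); first exact: sliceD.
by rewrite -(scale0r 0) sliceZ scale0r.
Qed.

Lemma slice_tens (A : 'M[C]_N) (B : 'M[C]_M) :
  slice e1 e2 (tensmx A B) = (mxadj e1 *m B *m e2) 0 0 *: A.
Proof.
rewrite /slice !tensmx_mul mul1mx mulmx1.
have unindex2 (k : 'I_(N * 1)) : (mxtens_unindex k).2 = 0.
  by apply: val_inj; rewrite /= modn1.
apply/matrixP => i j; rewrite castmxE !mxE mulrC !unindex2.
by congr (_ * A _ _); apply: val_inj; rewrite /= divn1.
Qed.

Lemma cvg_slice (u : nat -> 'M[C]_(N * M)) (A : 'M[C]_(N * M)) :
  u @ \oo --> A -> (fun n => slice e1 e2 (u n)) @ \oo --> slice e1 e2 A.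
Proof.
move/(cvg_mulmx2 (P := tensmx 1%:M (mxadj e1)) (Q := tensmx 1%:M e2))/cvg_mxP => uA.
by apply/cvg_mxP => i j; rewrite castmxE; under eq_cvg do rewrite castmxE; exact: uA.
Qed.

End slices.

Section reproducing_kernel.
Variables (R : realType) (m : nat) (p : R).
Hypothesis p_gt0 : 0 < p.
Local Notation C := R[i].

Lemma rC_expr_ge0 k : 0 <= rC (p ^+ k).
Proof. by rewrite /rC complexr0 ler0c exprn_ge0 // ltW. Qed.

Lemma rC_exprVr k : rC (p ^- k) * rC (p ^+ k) = 1.
Proof. by rewrite /rC !complexr0 -rmorphM mulVf ?expf_neq0 ?gt_eqF. Qed.

Lemma gram_diag_ge N (X : 'I_m -> 'M[C]_N) w a b :
  rC (p ^+ size w) * `|wpow X w a b| ^+ 2 <=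
  (rC (p ^+ size w) *: (mxadj (wpow X w) *m wpow X w)) b b.
Proof.
rewrite !mxE ler_wpM2l ?rC_expr_ge0 // (bigD1 a) //= !mxE normCK mulrC lerDl.
by rewrite sumr_ge0 // => k _; rewrite !mxE mulrC mul_conjC_ge0.
Qed.

Lemma Upsilon_weighted_entry_bounded N (X : 'I_m -> 'M[C]_N) a b :
  Upsilon p X -> exists B, forall L,
    psum (fun w => rC (p ^+ size w) * `|wpow X w a b| ^+ 2) L <= B.
Proof.
move=> [S /cvg_mxP/(_ b b) gram_cvg].
have [B [_ B_bound]] := cvg_seq_bounded (cvgP _ gram_cvg).
exists (B + 1) => L.
have gram_bb_ge0 w : 0 <= (rC (p ^+ size w) *: (mxadj (wpow X w) *m wpow X w)) b b.
  by apply: le_trans (gram_diag_ge X w a b); rewrite mulr_ge0 ?rC_expr_ge0 ?exprn_ge0.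
apply: le_trans (B_bound _ _ L I); last by rewrite ltrDl ltr01.
rewrite ger0_norm psum_mxE; first exact: psum_ler (fun w => gram_diag_ge X w a b).
by do 2![apply: sumr_ge0 => ? _]; apply: gram_bb_ge0.
Qed.

Lemma cvg_cross_series N M (X : 'I_m -> 'M[C]_N) (Y : 'I_m -> 'M[C]_M) a1 b1 a2 b2 :
  Upsilon p X -> Upsilon p Y ->
  cvgn (psum (fun w => rC (p ^+ size w) * (wpow X w a1 b1 * (wpow Y w a2 b2)^*))).
Proof.
move=> /(Upsilon_weighted_entry_bounded a1 b1) [BX BX_bound].
move=> /(Upsilon_weighted_entry_bounded a2 b2) [BY BY_bound].
apply: (@cvg_series_normC_bounded _ (fun l => lsum l _) (BX + BY)) => L.
apply: le_trans (lerD (BX_bound L) (BY_bound L)); rewrite -psumD.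
apply: ler_sum => l _; apply: le_trans (ler_norm_sum _ _ _) _; apply: ler_sum => w _.
rewrite normrM ger0_norm ?rC_expr_ge0 // -mulrDr ler_wpM2l ?rC_expr_ge0 //.
rewrite normrM norm_conjC; set x := `|_|; set y := `|_|.
have [x_ge0 y_ge0] : 0 <= x /\ 0 <= y by split; exact: normr_ge0.
apply: le_trans (real_leif_mean_square_scaled (ger0_real x_ge0) (ger0_real y_ge0)).
by rewrite mulr2n lerDl mulr_ge0.
Qed.

Lemma Kp_cvg N M (X : 'I_m -> 'M[C]_N) (Y : 'I_m -> 'M[C]_M) :
  Upsilon p X -> Upsilon p Y ->
  psum (fun w => rC (p ^+ size w) *: tensmx (wpow X w) (mxadj (wpow Y w))) @ \oo -->
  Kp p X Y.
Proof.
move=> X_ups Y_ups; apply/cvgn_mxP => i j.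
set i' := mxtens_unindex i; set j' := mxtens_unindex j.
rewrite (_ : (fun L => _) = psum (fun w =>
    rC (p ^+ size w) * (wpow X w i'.1 j'.1 * (wpow Y w j'.2 i'.2)^*))).
  exact: cvg_cross_series.
by apply: funext => L; rewrite psum_mxE; congr psum; apply: funext => w; rewrite !mxE.
Qed.

Definition kernel_coef M (e1 e2 : 'cV[C]_M) (Y : 'I_m -> 'M[C]_M) w : C :=
  rC (p ^+ size w) * (mxadj e1 *m mxadj (wpow Y w) *m e2) 0 0.

Lemma slice_Kp_cvg N M (e1 e2 : 'cV[C]_M) (X : 'I_m -> 'M[C]_N)
    (Y : 'I_m -> 'M[C]_M) :
  Upsilon p X -> Upsilon p Y ->
  psum (fun w => kernel_coef e1 e2 Y w *: wpow X w) @ \oo --> slice e1 e2 (Kp p X Y).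
Proof.
move=> X_ups Y_ups; rewrite (_ : psum _ = fun L => slice e1 e2
    (psum (fun w => rC (p ^+ size w) *: tensmx (wpow X w) (mxadj (wpow Y w))) L)).
  exact: cvg_slice (Kp_cvg X_ups Y_ups).
apply: funext => L; rewrite slice_psum; congr psum; apply: funext => w.
by rewrite sliceZ slice_tens scalerA.
Qed.

Lemma ip_kernel_coef M (e1 e2 : 'cV[C]_M) (Y : 'I_m -> 'M[C]_M) (c : seq 'I_m -> C)
    (F : 'M[C]_M) :
  psum (fun w => c w *: wpow Y w) @ \oo --> F ->
  ip_to p c (kernel_coef e1 e2 Y) ((mxadj e2 *m F *m e1) 0 0).
Proof.
move=> cF; rewrite /ip_to.
have term w : rC (p ^- size w) * c w * (kernel_coef e1 e2 Y w)^* =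
    (mxadj e2 *m (c w *: wpow Y w) *m e1) 0 0.
  rewrite /kernel_coef rmorphM /= -mxadjE !mxadjM !mxadjK mulmxA.
  rewrite (conj_Creal (ger0_real (rC_expr_ge0 _))).
  rewrite -scalemxAr -scalemxAl [in RHS]mxE -[RHS]mul1r -(rC_exprVr (size w)).
  ring.
rewrite (_ : psum _ =
    fun L => (mxadj e2 *m psum (fun w => c w *: wpow Y w) L *m e1) 0 0).
  exact: (cvg_mxP _ _).1 (cvg_mulmx2 cF) 0 0.
apply: funext => L; rewrite psum_mulmx2 psum_mxE; congr psum.
by apply: funext => w; rewrite term.
Qed.

Lemma ell2_kernel_coef M (e1 e2 : 'cV[C]_M) (Y : 'I_m -> 'M[C]_M) :
  Upsilon p Y -> ell2 p (kernel_coef e1 e2 Y).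
Proof.
move=> Y_ups; have := slice_Kp_cvg (e1 := e1) (e2 := e2) Y_ups Y_ups.
move/(ip_kernel_coef (e1 := e1) (e2 := e2)); rewrite /ip_to => kernel_norm; eexists.
rewrite (_ : (fun w => _) = fun w => rC (p ^- size w) * kernel_coef e1 e2 Y w *
  (kernel_coef e1 e2 Y w)^*); first exact: kernel_norm.
by apply: funext => w; rewrite sqr_normc mulrA.
Qed.

End reproducing_kernel.

Theorem proposition3p14 (R : realType) (m : nat) (p : R) (M : nat)
    (Y : 'I_m -> 'M[R[i]]_M) :
  0 < p -> (0 < M)%N -> Upsilon p Y ->
  (* (i) *)
  (forall e1 e2 : 'cV[R[i]]_M,
     H2 p (fun N (X : 'I_m -> 'M[R[i]]_N) => slice e1 e2 (Kp p X Y))) /\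
  (* (ii) *)
  (forall (e1 e2 : 'cV[R[i]]_M) (f : ncmap R m)
          (cf cK : seq 'I_m -> R[i]),
     H2 p f -> coeffs p cf f ->
     coeffs p cK (fun N (X : 'I_m -> 'M[R[i]]_N) => slice e1 e2 (Kp p X Y)) ->
     ip_to p cf cK ((mxadj e2 *m f M Y *m e1) 0 0)).
Proof.
move=> p_gt0 _ Y_ups.
have kernel_coeffs e1 e2 :
    coeffs p (kernel_coef p e1 e2 Y) (fun N X => slice e1 e2 (Kp p X Y)).
  split=> [|N X X_ups]; first exact: ell2_kernel_coef.
  exact: slice_Kp_cvg.
split=> [e1 e2 | e1 e2 f cf cK _ [_ cf_f] cK_coeffs].
  split; last by exists (kernel_coef p e1 e2 Y).
  by have [_ kernel_series] := kernel_coeffs e1 e2; exact: ncfun_series kernel_series.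
rewrite (coeffs_unique cK_coeffs (kernel_coeffs e1 e2)).
exact: ip_kernel_coef (cf_f _ _ Y_ups).
Qed.
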